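(* Let $n$ training samples carry labels in $\{1,\dots,K\}$ with indicator matrix $F\in\mathbb{R}^{K\times n}$. Let the basis $G_1,\dots,G_r$ ($r\le n$) be a subset of the training samples such that every class contains at least one basis vector, and let $F_{G_i}$ be the indicator vector of the class of $G_i$. Let $W\in\mathbb{R}^{r\times n}$ be an entrywise nonnegative similarity matrix with all column sums positive, $S=\operatorname{diag}(\mathbf{1}^TW)$, $\tilde W=WS^{-1}$, and assume $\tilde W$ has full row rank. Let $X^*=F\tilde W^T(\tilde W\tilde W^T)^{-1}$. If $W$ satisfies the ideal bipartite-graph condition, i.e. $W_{ij}=0$ whenever $F_{G_i}\neq F_j$, then the rows of $F$ lie in the row space of $\tilde W$ and zero fitting error is achieved: $F=X^*\tilde W$.
   Context: The columns of $F$ are standard basis vectors of $\mathbb{R}^K$: $F_j=e_k$ iff sample $j$ is in class $k$. $W_{ij}$ is the similarity between basis vector $G_i$ and training sample $j$. $X^*$ is the minimizer of $\|F-X\tilde W\|_F^2$ (normalized RBF network). *)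

From HB Require Import structures.
From mathcomp Require Import all_boot all_order all_algebra.
Set Implicit Arguments. Unset Strict Implicit. Unset Printing Implicit Defensive.
Import Order.TTheory GRing.Theory Num.Theory.
Local Open Scope ring_scope.

Definition indicator_mx (R : nzRingType) (K n : nat) (lab : 'I_n -> 'I_K)
  : 'M[R]_(K, n) := \matrix_(k < K, j < n) (lab j == k)%:R.

Definition colsum_diag (R : nzRingType) (r n : nat) (W : 'M[R]_(r, n))
  : 'M[R]_n := diag_mx (\row_(j < n) \sum_(i < r) W i j).

Definition normalized_W (R : fieldType) (r n : nat) (W : 'M[R]_(r, n))
  : 'M[R]_(r, n) := W *m invmx (colsum_diag W).

Definition Xstar (R : fieldType) (K r n : nat) (F : 'M[R]_(K, n))
  (Wt : 'M[R]_(r, n)) : 'M[R]_(K, r) :=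
  F *m Wt^T *m invmx (Wt *m Wt^T).

From HB Require Import structures.
From mathcomp Require Import all_boot all_order all_algebra.

Set Implicit Arguments.
Unset Strict Implicit.
Unset Printing Implicit Defensive.
Import Order.TTheory GRing.Theory Num.Theory.
Local Open Scope ring_scope.

(* In the ideal bipartite graph, basis vector G_i only links to samples of its
   own class, so F_G W = F S, where F_G is the class indicator of the basis
   and S the diagonal of column sums; hence F = F_G W~ lies in the row space
   of W~.  Over an ordered field, full row rank makes the Gram matrix W~ W~^T
   invertible, and the least-squares solution of C W~ = F recovers C exactly. *)

Lemma row_mul_tr_eq0 (R : realFieldType) (n : nat) (u : 'rV[R]_n) :
  u *m u^T = 0 -> u = 0.
Proof.
move=> /(congr1 (fun M : 'M_1 => M 0 0)); rewrite !mxE => sum_sq0.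
apply/rowP => k; rewrite mxE; apply/eqP; rewrite -sqrf_eq0; apply/eqP.
have sq_ge0 (i : 'I_n) : 0 <= u 0 i * u^T i 0 by rewrite mxE -expr2 sqr_ge0.
have := psumr_eq0P (fun i _ => sq_ge0 i) sum_sq0 (i := k) isT.
by rewrite mxE -expr2.
Qed.

Lemma row_free_gram_unit (R : realFieldType) (r n : nat) (A : 'M[R]_(r, n)) :
  row_free A -> A *m A^T \in unitmx.
Proof.
move=> freeA; rewrite unitmxE unitfE; apply/negP => /det0P [v v_neq0 vAAt0].
have vA0 : v *m A = 0.
  by apply: row_mul_tr_eq0; rewrite trmx_mul mulmxA -(mulmxA v) vAAt0 mul0mx.
suff v0 : v = 0 by rewrite v0 eqxx in v_neq0.
by apply: (row_free_inj freeA); rewrite vA0 mul0mx.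
Qed.

Lemma Xstar_mulmx (R : fieldType) (K r n : nat) (C : 'M[R]_(K, r))
    (A : 'M[R]_(r, n)) :
  A *m A^T \in unitmx -> Xstar (C *m A) A = C.
Proof. by move=> gramA; rewrite /Xstar -(mulmxA C) mulmxK. Qed.

Lemma colsum_diag_unit (R : fieldType) (r n : nat) (W : 'M[R]_(r, n)) :
  (forall j, \sum_(i < r) W i j != 0) -> colsum_diag W \in unitmx.
Proof.
move=> colsum_neq0; rewrite unitmxE unitfE det_diag.
by apply/prodf_neq0 => j _; rewrite mxE.
Qed.

Lemma mul_indicator_mx_colsum (R : nzRingType) (K r n : nat)
    (labG : 'I_r -> 'I_K) (lab : 'I_n -> 'I_K) (W : 'M[R]_(r, n)) :
  (forall i j, labG i != lab j -> W i j = 0) ->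
  indicator_mx R labG *m W = indicator_mx R lab *m colsum_diag W.
Proof.
move=> ideal; apply/matrixP => k j; rewrite mul_mx_diag !mxE mulr_sumr.
apply: eq_bigr => i _; rewrite !mxE.
by case: (eqVneq (labG i) (lab j)) => [-> // | /ideal ->]; rewrite !mulr0.
Qed.

Lemma indicator_mx_normalized_W (R : fieldType) (K r n : nat)
    (labG : 'I_r -> 'I_K) (lab : 'I_n -> 'I_K) (W : 'M[R]_(r, n)) :
  (forall j, \sum_(i < r) W i j != 0) ->
  (forall i j, labG i != lab j -> W i j = 0) ->
  indicator_mx R lab = indicator_mx R labG *m normalized_W W.
Proof.
move=> colsum_neq0 ideal; rewrite /normalized_W mulmxA.
by rewrite (mul_indicator_mx_colsum ideal) mulmxK // colsum_diag_unit.
Qed.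

Theorem theorem2 (R : realFieldType) (K n r : nat)
  (lab : 'I_n -> 'I_K)            (* labels of the n training samples *)
  (g : 'I_r -> 'I_n)              (* basis G_i = training sample g i *)
  (W : 'M[R]_(r, n)) :
  injective g ->                                   (* basis is a subset, r <= n *)
  (forall k : 'I_K, exists i : 'I_r, lab (g i) = k) -> (* every class has a basis vector *)
  (forall i j, 0 <= W i j) ->
  (forall j : 'I_n, 0 < \sum_(i < r) W i j) ->
  row_free (normalized_W W) ->                    (* W~ has full row rank *)
  (forall i j, lab (g i) != lab j -> W i j = 0) -> (* ideal bipartite graph *)
  ((indicator_mx R lab <= normalized_W W)%MS /\
   indicator_mx R lab =
     Xstar (indicator_mx R lab) (normalized_W W) *m normalized_W W).
Proof.
move=> _ _ _ colsum_gt0 freeWt ideal.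
have colsum_neq0 j : \sum_(i < r) W i j != 0 by rewrite gt_eqF.
have -> := indicator_mx_normalized_W colsum_neq0 ideal.
split; first exact: submxMl.
by rewrite Xstar_mulmx // row_free_gram_unit.
Qed.
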